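(* For $\omega\in[0,1]$ let $p_0^{\ast}(\omega)$ be the unique positive solution $p$ of $c_1\chi\omega(1-\omega)\tau_D^2p^2+(\alpha+c_2(1-\omega)\tau_D)p-\varepsilon_D=0$ (the pollution level of the steady state $(0,p_0^\ast,\chi\omega\tau_Dp_0^\ast)$ with only dirty producers). If $$\varepsilon_D>\frac{c_2^2\tau_D+\alpha c_2}{c_1\chi\tau_D},$$ then there exists $\tilde\omega\in(0,1/2)$ such that $\omega\mapsto p_0^{\ast}(\omega)$ is decreasing on $[0,\tilde\omega)$ and increasing on $(\tilde\omega,1]$. If this inequality does not hold, then $\omega\mapsto p_0^{\ast}(\omega)$ is increasing on $[0,1]$.
   Context: Parameters: $\tau_D>\tau_C\ge0$, $\varepsilon_D>\varepsilon_C\ge 0$, $\alpha\in(0,1]$, $\sigma\in[0,1)$, $\gamma\in[0,1)$, $d>0$, $c_1>0$, $c_2\ge 0$, and $\chi=(d/(1-\sigma))^{1/(1-\gamma)}$. *)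

From Stdlib Require Import Reals Lra.
Open Scope R_scope.

Definition chi (d sigma gamma : R) : R :=
  Rpower (d / (1 - sigma)) (1 / (1 - gamma)).

Definition p0_root (c1 c2 alpha tauD epsD ch omega p : R) : Prop :=
  0 < p /\
  c1 * ch * omega * (1 - omega) * tauD ^ 2 * p ^ 2
    + (alpha + c2 * (1 - omega) * tauD) * p - epsD = 0.

(** Write K = c1 χ τD², b = c2 τD and s = 1 - 2ω.  Differentiating the
    steady-state equation implicitly shows that p0 decreases exactly where
    s K p0 > b; comparing the equations at two points makes this rigorous
    without differentiability.  Eliminating p0 through the equation, the sign
    of s K p0 - b on 0 < s <= 1 is that of the quadratic
    Q(s) = (4 K εD - b²) s² - (2 b² + 4 α b) s - b², with Q(0) < 0.  If
    Q(1) > 0, which is the stated inequality on εD, Q has a single root r in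
    (0, 1) and the minimum of p0 sits at ω = (1 - r)/2 < 1/2; otherwise Q <= 0
    on [0, 1] and p0 is increasing. *)

From Stdlib Require Import Reals Lra Psatz.
Open Scope R_scope.

Lemma quadratic_nonpos_on_unit_interval (a c e s : R) :
  0 <= c -> 0 <= e -> a - c - e <= 0 -> 0 <= s <= 1 ->
  a * s ^ 2 - c * s - e <= 0.
Proof.
  intros Hc He Hace Hs.
  destruct (Rle_or_lt 0 a) as [Ha | Ha].
  - (* linear interpolation between s = 0 and s = 1, minus a s (1 - s) *)
    assert (Hinterp : a * s ^ 2 - c * s - e
                      = (1 - s) * (- e) + s * (a - c - e) - a * (s * (1 - s)))
      by ring.
    assert (0 <= a * (s * (1 - s))) by (apply Rmult_le_pos; nra).
    nra.
  - nra.
Qed.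

Lemma quadratic_root_in_unit_interval (a c e : R) :
  0 <= c -> 0 < e -> 0 < a - c - e ->
  exists r, 0 < r < 1 /\ a * r ^ 2 - c * r - e = 0.
Proof.
  intros Hc He Hace.
  set (D := c ^ 2 + 4 * a * e).
  assert (HD : c ^ 2 < D) by (unfold D; nra).
  assert (Hsq : sqrt D * sqrt D = D) by (apply sqrt_sqrt; nra).
  assert (Hsq0 : 0 <= sqrt D) by apply sqrt_pos.
  assert (Hsq_lt : sqrt D < 2 * a - c).
  { destruct (Rlt_or_le (sqrt D) (2 * a - c)) as [Hlt | Hge]; [exact Hlt |].
    assert (Hsqr : (2 * a - c) * (2 * a - c) <= sqrt D * sqrt D)
      by (apply Rmult_le_compat; lra).
    assert (D < (2 * a - c) * (2 * a - c)) by (unfold D; nra).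
    lra. }
  set (r := (c + sqrt D) / (2 * a)).
  assert (Hr : 2 * a * r = c + sqrt D) by (unfold r; field; nra).
  exists r; split; [split; nra |].
  assert (H4a : 4 * a * (a * r ^ 2 - c * r - e)
                = sqrt D * sqrt D - (c ^ 2 + 4 * a * e)).
  { replace (4 * a * (a * r ^ 2 - c * r - e))
      with ((2 * a * r) ^ 2 - 2 * c * (2 * a * r) - 4 * a * e) by ring.
    rewrite Hr; ring. }
  rewrite Hsq in H4a; unfold D in H4a.
  nra.
Qed.

Lemma quadratic_sign_around_root (a c e r s : R) :
  0 < a -> 0 < e -> 0 < r -> a * r ^ 2 - c * r - e = 0 -> 0 <= s ->
  (s < r -> a * s ^ 2 - c * s - e < 0) /\ (r < s -> 0 < a * s ^ 2 - c * s - e).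
Proof.
  intros Ha He Hr Hroot Hs.
  assert (Hfactor : a * s ^ 2 - c * s - e = (s - r) * (a * (s + r) - c)) by nra.
  (* a r^2 = c r + e > c r *)
  assert (Har : c < a * r) by nra.
  assert (0 <= a * s) by (apply Rmult_le_pos; lra).
  assert (Hpos : 0 < a * (s + r) - c) by lra.
  rewrite Hfactor; split; intro Hsr; nra.
Qed.

Lemma supercritical_iff (c1 c2 ch tauD alpha eps : R) :
  0 < c1 * ch -> 0 < tauD ->
  eps > (c2 ^ 2 * tauD + alpha * c2) / (c1 * ch * tauD) <->
  (c2 * tauD) ^ 2 + alpha * (c2 * tauD) < c1 * ch * tauD ^ 2 * eps.
Proof.
  intros Hc1ch Ht.
  assert (Hden : 0 < c1 * ch * tauD * tauD)
    by (apply Rmult_lt_0_compat; [apply Rmult_lt_0_compat |]; assumption).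
  set (q := (c2 ^ 2 * tauD + alpha * c2) / (c1 * ch * tauD)).
  assert (Hq : (c2 * tauD) ^ 2 + alpha * (c2 * tauD) = q * (c1 * ch * tauD * tauD))
    by (unfold q; field; repeat split; intro Hzero; rewrite Hzero in *; lra).
  replace (c1 * ch * tauD ^ 2 * eps) with (eps * (c1 * ch * tauD * tauD)) by ring.
  rewrite Hq; split; intro H.
  - apply Rmult_lt_compat_r; assumption.
  - exact (Rmult_lt_reg_r _ _ _ Hden H).
Qed.

Section DirtySteadyState.

Variables (K b alpha eps : R) (p : R -> R).
Hypotheses (HK : 0 < K) (Hb : 0 < b) (Halpha : 0 < alpha).
Hypothesis Hp : forall w, 0 <= w <= 1 ->
  0 < p w /\ K * w * (1 - w) * p w ^ 2 + (alpha + b * (1 - w)) * p w = eps.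

(* By implicit differentiation, p' w has the sign of - descent w. *)
Definition descent (w : R) : R := (1 - 2 * w) * (K * p w) - b.

Definition descent_poly (s : R) : R :=
  (4 * K * eps - b ^ 2) * s ^ 2 - (2 * b ^ 2 + 4 * alpha * b) * s - b ^ 2.

Lemma p_lt_of_descent_nonpos (x y : R) :
  0 <= x -> x < y -> y <= 1 -> descent x <= 0 -> p x < p y.
Proof.
  unfold descent; intros Hx Hxy Hy Hdx.
  destruct (Hp x) as [Hpx Ex]; [lra |].
  destruct (Hp y) as [Hpy Ey]; [lra |].
  set (M := K * (y * (1 - y)) * (p y + p x) + alpha + b * (1 - y)).
  assert (HM : 0 < M).
  { assert (0 <= K * (y * (1 - y)) * (p y + p x))
      by (apply Rmult_le_pos; [apply Rmult_le_pos |]; nra).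
    unfold M; nra. }
  (* subtract the two steady-state equations, both evaluated with y's coefficients *)
  assert (Hdiff : (p y - p x) * M = (y - x) * p x * (b - K * (1 - x - y) * p x)).
  { unfold M; rewrite <- Ex in Ey; nra. }
  assert (0 < K * p x) by nra.
  assert (0 < (y - x) * p x * (b - K * (1 - x - y) * p x))
    by (apply Rmult_lt_0_compat; [apply Rmult_lt_0_compat |]; nra).
  nra.
Qed.

Lemma p_lt_of_descent_pos (x y : R) :
  0 <= x -> x < y -> y <= 1 -> 0 < descent y -> p y < p x.
Proof.
  unfold descent; intros Hx Hxy Hy Hdy.
  destruct (Hp x) as [Hpx Ex]; [lra |].
  destruct (Hp y) as [Hpy Ey]; [lra |].
  set (M := K * (x * (1 - x)) * (p x + p y) + alpha + b * (1 - x)).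
  assert (HM : 0 < M).
  { assert (0 <= K * (x * (1 - x)) * (p x + p y))
      by (apply Rmult_le_pos; [apply Rmult_le_pos |]; nra).
    unfold M; nra. }
  assert (Hdiff : (p x - p y) * M = (y - x) * p y * (K * (1 - x - y) * p y - b)).
  { unfold M; rewrite <- Ex in Ey; nra. }
  assert (0 < K * p y) by nra.
  assert (0 < (y - x) * p y * (K * (1 - x - y) * p y - b))
    by (apply Rmult_lt_0_compat; [apply Rmult_lt_0_compat |]; nra).
  nra.
Qed.

Lemma descent_neg_right_half (w : R) : 1 / 2 <= w <= 1 -> descent w < 0.
Proof.
  unfold descent; intro Hw.
  destruct (Hp w) as [Hpw _]; [lra |].
  assert (0 < K * p w) by nra.
  nra.
Qed.

Lemma descent_poly_factor (w : R) : 0 <= w < 1 / 2 ->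
  exists F, 0 < F /\ descent_poly (1 - 2 * w) = F * descent w.
Proof.
  unfold descent_poly, descent; intro Hw.
  destruct (Hp w) as [Hpw Ew]; [lra |].
  set (s := 1 - 2 * w).
  assert (Hs : 0 < s <= 1) by (unfold s; lra).
  assert (HKp : 0 < K * p w) by nra.
  exists ((1 - s ^ 2) * (s * (K * p w) + b) + (4 * alpha + 2 * b + 2 * b * s) * s).
  split.
  - assert (0 <= (1 - s ^ 2) * (s * (K * p w) + b)) by (apply Rmult_le_pos; nra).
    assert (0 < (4 * alpha + 2 * b + 2 * b * s) * s) by (apply Rmult_lt_0_compat; nra).
    lra.
  - rewrite <- Ew; unfold s; ring.
Qed.

Lemma descent_nonpos_of_poly (w : R) : 0 <= w <= 1 ->
  (w < 1 / 2 -> descent_poly (1 - 2 * w) <= 0) -> descent w <= 0.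
Proof.
  intros Hw Hpoly.
  destruct (Rlt_or_le w (1 / 2)) as [Hlt | Hge].
  - destruct (descent_poly_factor w) as [F [HF HQ]]; [lra |].
    specialize (Hpoly Hlt); nra.
  - apply Rlt_le, descent_neg_right_half; lra.
Qed.

Lemma descent_pos_of_poly (w : R) : 0 <= w < 1 / 2 ->
  0 < descent_poly (1 - 2 * w) -> 0 < descent w.
Proof.
  intros Hw Hpoly.
  destruct (descent_poly_factor w) as [F [HF HQ]]; [lra |].
  nra.
Qed.

Theorem p_increasing_subcritical : K * eps <= b ^ 2 + alpha * b ->
  forall x y, 0 <= x -> x < y -> y <= 1 -> p x < p y.
Proof.
  intros Hsub x y Hx Hxy Hy.
  apply p_lt_of_descent_nonpos; try lra.
  apply descent_nonpos_of_poly; [lra |]; intro Hx2.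
  apply quadratic_nonpos_on_unit_interval; nra.
Qed.

Theorem p_valley_supercritical : b ^ 2 + alpha * b < K * eps ->
  exists wt, 0 < wt < 1 / 2 /\
    (forall x y, 0 <= x -> x < y -> y < wt -> p y < p x) /\
    (forall x y, wt < x -> x < y -> y <= 1 -> p x < p y).
Proof.
  intro Hsup.
  destruct (quadratic_root_in_unit_interval (4 * K * eps - b ^ 2)
              (2 * b ^ 2 + 4 * alpha * b) (b ^ 2)) as [r [Hr Hroot]]; try nra.
  assert (Hlead : 0 < 4 * K * eps - b ^ 2) by nra.
  assert (Hb2 : 0 < b ^ 2) by nra.
  pose proof (fun s => quadratic_sign_around_root _ _ _ r s Hlead Hb2 (proj1 Hr) Hroot)
    as Hsign.
  exists ((1 - r) / 2); split; [lra | split].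
  - intros x y Hx Hxy Hy.
    apply p_lt_of_descent_pos; try lra.
    apply descent_pos_of_poly; [lra |].
    apply (Hsign (1 - 2 * y)); lra.
  - intros x y Hx Hxy Hy.
    apply p_lt_of_descent_nonpos; try lra.
    apply descent_nonpos_of_poly; [lra |]; intro Hx2.
    apply Rlt_le, (Hsign (1 - 2 * x)); lra.
Qed.

End DirtySteadyState.

Theorem proposition5
  (tauD tauC epsD epsC alpha sigma gamma d c1 c2 : R)
  (HtauC : 0 <= tauC) (HtauD : tauC < tauD)
  (HepsC : 0 <= epsC) (HepsD : epsC < epsD)
  (Halpha0 : 0 < alpha) (Halpha1 : alpha <= 1)
  (Hsigma0 : 0 <= sigma) (Hsigma1 : sigma < 1)
  (Hgamma0 : 0 <= gamma) (Hgamma1 : gamma < 1)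
  (Hd : 0 < d) (Hc1 : 0 < c1) (Hc2 : 0 < c2)
  (p0 : R -> R)
  (Hp0 : forall omega, 0 <= omega <= 1 ->
           p0_root c1 c2 alpha tauD epsD (chi d sigma gamma) omega (p0 omega)) :
  (epsD > (c2 ^ 2 * tauD + alpha * c2) / (c1 * chi d sigma gamma * tauD) ->
     exists wt, 0 < wt < 1 / 2 /\
       (forall x y, 0 <= x -> x < y -> y < wt -> p0 y < p0 x) /\
       (forall x y, wt < x -> x < y -> y <= 1 -> p0 x < p0 y)) /\
  (~ (epsD > (c2 ^ 2 * tauD + alpha * c2) / (c1 * chi d sigma gamma * tauD)) ->
     forall x y, 0 <= x -> x < y -> y <= 1 -> p0 x < p0 y).
Proof.
  assert (Hchi : 0 < chi d sigma gamma) by apply exp_pos.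
  set (ch := chi d sigma gamma) in *.
  assert (Ht : 0 < tauD) by lra.
  assert (Hc1ch : 0 < c1 * ch) by nra.
  assert (HK : 0 < c1 * ch * tauD ^ 2)
    by (apply Rmult_lt_0_compat; [| apply pow_lt]; assumption).
  assert (Hb : 0 < c2 * tauD) by (apply Rmult_lt_0_compat; assumption).
  assert (Hp : forall w, 0 <= w <= 1 ->
    0 < p0 w /\ c1 * ch * tauD ^ 2 * w * (1 - w) * p0 w ^ 2
                + (alpha + c2 * tauD * (1 - w)) * p0 w = epsD).
  { intros w Hw; destruct (Hp0 w Hw) as [Hpos Heq]; split; [exact Hpos | lra]. }
  rewrite (supercritical_iff c1 c2 ch tauD alpha epsD Hc1ch Ht).
  split.
  - exact (p_valley_supercritical _ _ _ _ _ HK Hb Halpha0 Hp).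
  - intro Hsub; apply (p_increasing_subcritical _ _ _ _ _ HK Hb Halpha0 Hp).
    lra.
Qed.
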